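(* Let $H$ be a hypergraph on $V=[n]$ and let $A,B$ be hyperedges of $H$. Then $A$ and $B$ are $r$-orthogonal if and only if $\mathrm{cl}_r(\{A,B\})=\mathrm{cl}_r(\{A\})\cup\mathrm{cl}_r(\{B\})$.
   Context: Hypergraphs on $V$ are identified with their hyperedge sets; $\{A\}$, $\{A,B\}$ denote hypergraphs on $V$ with the indicated hyperedges. $\mathcal K_r(n)$ is the class of hypergraphs $\mathcal E$ on $V$ satisfying: (R0) every $X\subseteq V$ with $|X|\le r$ is in $\mathcal E$; (R1) $A\in\mathcal E\Rightarrow V\setminus A\in\mathcal E$; (R2) $A,B\in\mathcal E$ and $|A\cap B|\ge r\Rightarrow A\cup B\in\mathcal E$. $\mathcal K^0_r(n)$ is the class satisfying (R0) and (R1) only. $\mathrm{cl}_r(H)$ (resp. $\mathrm{cl}^0_r(H)$) is the intersection of all hypergraphs in $\mathcal K_r(n)$ (resp. $\mathcal K^0_r(n)$) containing $H$. $A,B$ are $r$-orthogonal if $\mathrm{cl}_r(\{A,B\})=\mathrm{cl}^0_r(\{A,B\})$. *)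

(* V = [n] is modelled as 'I_n; a hypergraph on V is its
   hyperedge set, a {set {set 'I_n}}. The axioms are boolean (finite
   quantifiers), which is what lets cl_r be a finite set. *)
From mathcomp Require Import all_boot.
Set Implicit Arguments. Unset Strict Implicit. Unset Printing Implicit Defensive.

Section Hyp.
Variable n : nat.
Local Notation V := ('I_n).
Local Notation hypergraph := {set {set V}}.

Definition R0 (r : nat) (E : hypergraph) : bool :=
  [forall X : {set V}, (#|X| <= r) ==> (X \in E)].
Definition R1 (E : hypergraph) : bool :=
  [forall A : {set V}, (A \in E) ==> (~: A \in E)].
Definition R2 (r : nat) (E : hypergraph) : bool :=
  [forall A : {set V}, forall B : {set V},
     [&& A \in E, B \in E & r <= #|A :&: B|] ==> (A :|: B \in E)].

Definition in_K (r : nat) (E : hypergraph) : bool := [&& R0 r E, R1 E & R2 r E].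
Definition in_K0 (r : nat) (E : hypergraph) : bool := R0 r E && R1 E.

Definition cl (r : nat) (H : hypergraph) : hypergraph :=
  \bigcap_(E : hypergraph | in_K r E && (H \subset E)) E.
Definition cl0 (r : nat) (H : hypergraph) : hypergraph :=
  \bigcap_(E : hypergraph | in_K0 r E && (H \subset E)) E.

Definition r_orthogonal (r : nat) (A B : {set V}) : Prop :=
  cl r [set A; B] = cl0 r [set A; B].
End Hyp.

(* The r-free closure cl^0_r(H) is explicit: the sets of size or co-size at
   most r together with H and the complements of the members of H.  For a
   single hyperedge A this family already satisfies (R2): two of its members
   meeting in at least r points are either nested (one of them is small),
   have a small complement of their union, or are A and ~A, whose union is V.
   Hence cl_r({A}) = cl^0_r({A}), and since the explicit description is
   additive in H, cl^0_r({A,B}) = cl_r({A}) ∪ cl_r({B}). *)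
From mathcomp Require Import all_boot.
Set Implicit Arguments. Unset Strict Implicit. Unset Printing Implicit Defensive.

Section Closures.
Variables n r : nat.
Local Notation V := ('I_n).
Local Notation hypergraph := {set {set V}}.

Lemma cl_min (E H : hypergraph) : in_K r E -> H \subset E -> cl r H \subset E.
Proof. by move=> KE HE; apply: bigcap_inf; rewrite KE HE. Qed.

Lemma cl0_min (E H : hypergraph) : in_K0 r E -> H \subset E -> cl0 r H \subset E.
Proof. by move=> KE HE; apply: bigcap_inf; rewrite KE HE. Qed.

Lemma in_K_K0 (E : hypergraph) : in_K r E -> in_K0 r E.
Proof. by case/and3P=> R0E R1E _; rewrite /in_K0 R0E R1E. Qed.

Lemma cl0_sub_cl (H : hypergraph) : cl0 r H \subset cl r H.
Proof.
by apply/bigcapsP => E /andP[KE HE]; apply: cl0_min (in_K_K0 KE) HE.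
Qed.

Definition K0_span (H : hypergraph) : hypergraph :=
  [set X : {set V} | [|| #|X| <= r, #|~: X| <= r, X \in H | ~: X \in H]].

Lemma sub_K0_span (H : hypergraph) : H \subset K0_span H.
Proof. by apply/subsetP => X HX; rewrite inE HX !orbT. Qed.

Lemma K0_span_in_K0 (H : hypergraph) : in_K0 r (K0_span H).
Proof.
apply/andP; split; apply/forallP => X; apply/implyP; rewrite !inE.
- by move->.
- by rewrite setCK; case/or4P=> ->; rewrite ?orbT.
Qed.

Lemma K0_span_min (E H : hypergraph) :
  in_K0 r E -> H \subset E -> K0_span H \subset E.
Proof.
case/andP=> /forallP R0E /forallP R1E /subsetP HE.
apply/subsetP => X; rewrite inE; case/or4P => [sX|cX|/HE//|/HE cX].
- exact: implyP (R0E X) sX.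
- by rewrite -(setCK X); apply: implyP (R1E _) _; apply: implyP (R0E _) cX.
- by rewrite -(setCK X); apply: implyP (R1E _) cX.
Qed.

Lemma cl0E (H : hypergraph) : cl0 r H = K0_span H.
Proof.
apply/eqP; rewrite eqEsubset cl0_min ?K0_span_in_K0 ?sub_K0_span //=.
by apply/bigcapsP => E /andP[KE HE]; apply: K0_span_min.
Qed.

Lemma K0_spanU (H1 H2 : hypergraph) :
  K0_span (H1 :|: H2) = K0_span H1 :|: K0_span H2.
Proof.
apply/setP => X; rewrite !inE.
by case: (#|X| <= r); case: (#|~: X| <= r); case: (X \in H1); case: (X \in H2);
   case: (~: X \in H1); case: (~: X \in H2).
Qed.

Lemma small_meet_subset (X Y : {set V}) :
  #|X| <= r -> r <= #|X :&: Y| -> X \subset Y.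
Proof.
move=> sX rXY; apply/setIidPl/eqP; rewrite eqEcard subsetIl /=.
exact: leq_trans sX rXY.
Qed.

Lemma cosmall_setUl (X Y : {set V}) : #|~: Y| <= r -> #|~: (X :|: Y)| <= r.
Proof.
by apply: leq_trans; apply: subset_leq_card; rewrite setCU subsetIr.
Qed.

Lemma K0_span1_setU (A X Y : {set V}) :
  X \in K0_span [set A] -> Y \in K0_span [set A] -> r <= #|X :&: Y| ->
  X :|: Y \in K0_span [set A].
Proof.
move=> hX hY rXY; have rYX : r <= #|Y :&: X| by rewrite setIC.
have spanT : setT \in K0_span [set A] by rewrite inE setCT cards0 orbT.
have eq_A_or_AC Z : Z \in K0_span [set A] -> ~~ (#|Z| <= r) -> ~~ (#|~: Z| <= r) ->
    Z = A \/ Z = ~: A.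
  by rewrite inE => /or4P[->|->|/set1P->|/set1P<-] // _ _; [left|right; rewrite setCK].
have [sX|nsX] := boolP (#|X| <= r).
  by rewrite (setUidPr (small_meet_subset sX rXY)).
have [cX|ncX] := boolP (#|~: X| <= r).
  by rewrite setUC inE (cosmall_setUl _ cX) orbT.
have [sY|nsY] := boolP (#|Y| <= r).
  by rewrite (setUidPl (small_meet_subset sY rYX)).
have [cY|ncY] := boolP (#|~: Y| <= r).
  by rewrite inE (cosmall_setUl _ cY) orbT.
have [->|->] : Y = X \/ Y = ~: X.
  by case: (eq_A_or_AC X hX nsX ncX) (eq_A_or_AC Y hY nsY ncY) => -> [] ->;
    rewrite ?setCK; [left|right|right|left].
- by rewrite setUid.
- by rewrite setUCr.
Qed.

Lemma K0_span1_in_K (A : {set V}) : in_K r (K0_span [set A]).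
Proof.
have /andP[R0A R1A] := K0_span_in_K0 [set A].
rewrite /in_K R0A R1A /=; apply/forallP => X; apply/forallP => Y.
by apply/implyP => /and3P[hX hY rXY]; apply: K0_span1_setU.
Qed.

Lemma cl1E (A : {set V}) : cl r [set A] = cl0 r [set A].
Proof.
apply/eqP; rewrite eqEsubset cl0_sub_cl andbT cl0E.
by rewrite cl_min ?K0_span1_in_K ?sub_K0_span.
Qed.

Lemma cl0_pair (A B : {set V}) :
  cl0 r [set A; B] = cl r [set A] :|: cl r [set B].
Proof. by rewrite !cl1E !cl0E -K0_spanU. Qed.

End Closures.

Theorem mainTheorem15 (n r : nat) (H : {set {set 'I_n}}) (A B : {set 'I_n}) :
  A \in H -> B \in H ->
  (r_orthogonal r A B <-> cl r [set A; B] = cl r [set A] :|: cl r [set B]).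
Proof. by move=> _ _; rewrite /r_orthogonal cl0_pair. Qed.
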